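(* Let $\chi:\mathcal H\to\mathcal H_L^\chi\otimes\mathcal H_R^\chi$ be a balanced splitting map such that $\mathcal A=\mathrm{stloc}_L(\chi)$ is a factor. Then there exist a canonical splitting map $\zeta:\mathcal H\to\mathcal H_L\otimes\mathcal H_R$ for $\mathcal A$, Hilbert spaces $\mathcal H_{M_L},\mathcal H_{M_R}$, a state $\phi\in\mathcal H_{M_L}\otimes\mathcal H_{M_R}$, and isometries $U_L:\mathcal H_L\otimes\mathcal H_{M_L}\to\mathcal H_L^\chi$ and $U_R:\mathcal H_{M_R}\otimes\mathcal H_R\to\mathcal H_R^\chi$ such that for all $x\in\mathcal H$, $\chi(x)=(U_L\otimes U_R)\big(\iota_\phi(\zeta(x))\big)$, where $\iota_\phi:\mathcal H_L\otimes\mathcal H_R\to\mathcal H_L\otimes\mathcal H_{M_L}\otimes\mathcal H_{M_R}\otimes\mathcal H_R$ is the linear map $a\otimes b\mapsto a\otimes\phi\otimes b$.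
   Context: All Hilbert spaces are finite-dimensional and complex. A splitting map on $\mathcal H$ is an isometry $\chi:\mathcal H\to\mathcal H_L^\chi\otimes\mathcal H_R^\chi$. $\mathrm{stloc}_L(\chi)$ is the set of $A\in\mathcal L(\mathcal H)$ for which there is $\tilde A\in\mathcal L(\mathcal H_L^\chi)$ with $A\chi^\dagger=\chi^\dagger(\tilde A\otimes\mathbb 1)$ and $\chi A=(\tilde A\otimes\mathbb 1)\chi$; $\mathrm{stloc}_R(\chi)$ is defined symmetrically on $\mathcal H_R^\chi$. $\chi$ is balanced if $\mathrm{stloc}_R(\chi)=\mathrm{stloc}_L(\chi)'$. A Von Neumann algebra $\mathcal A$ on $\mathcal H$ is a factor if $\mathcal A\cap\mathcal A'=\mathbb C\mathbb 1$. A representation unitary for a Von Neumann algebra $\mathcal A$ is a unitary $U:\mathcal H\to\bigoplus_i(\mathcal H_L^i\otimes\mathcal H_R^i)$ with $U\mathcal AU^\dagger=\bigoplus_i\mathcal L(\mathcal H_L^i)\otimes\mathbb 1_{\mathcal H_R^i}$; a canonical splitting map for $\mathcal A$ is the map $x\mapsto Ux$ followed by the natural inclusion $\bigoplus_i(\mathcal H_L^i\otimes\mathcal H_R^i)\hookrightarrow(\bigoplus_i\mathcal H_L^i)\otimes(\bigoplus_i\mathcal H_R^i)$, for some representation unitary $U$. *)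

(* Finite-dimensional complex Hilbert spaces are modelled as
   C^T for a finite type T (the index set of an orthonormal basis), with
   C := complex R for an arbitrary realType R (i.e. the complex numbers).
   Operators T2 -> T1 are kernels T1 -> T2 -> C (row index = codomain). *)
From HB Require Import structures.
From mathcomp Require Import all_boot all_order all_algebra.
From mathcomp Require Import reals complex.
Set Implicit Arguments. Unset Strict Implicit. Unset Printing Implicit Defensive.
Import Order.TTheory GRing.Theory Num.Theory.
Local Open Scope ring_scope.

Section HilbertOps.
Variable R : realType.
Definition C := complex R.

Definition vec (T : finType) := T -> C.
Definition op (T1 T2 : finType) := T1 -> T2 -> C.

Definition opapply (T1 T2 : finType) (A : op T1 T2) (x : vec T2) : vec T1 :=
  fun i => \sum_(j : T2) A i j * x j.
Definition opcomp (T1 T2 T3 : finType) (A : op T1 T2) (B : op T2 T3) : op T1 T3 :=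
  fun i k => \sum_(j : T2) A i j * B j k.
Definition opadj (T1 T2 : finType) (A : op T1 T2) : op T2 T1 :=
  fun j i => Num.conj (A i j).
Definition idop (T : finType) : op T T := fun i j => (i == j)%:R.
Arguments idop : clear implicits.
Definition scalop (T : finType) (c : C) : op T T := fun i j => c * (i == j)%:R.
Arguments scalop : clear implicits.
Definition optens (T1 T2 S1 S2 : finType) (A : op T1 S1) (B : op T2 S2)
  : op (T1 * T2)%type (S1 * S2)%type := fun i j => A i.1 j.1 * B i.2 j.2.

Definition is_isometry (T1 T2 : finType) (V : op T1 T2) : Prop :=
  opcomp (opadj V) V = idop T2.
Definition is_unitary (T1 T2 : finType) (V : op T1 T2) : Prop :=
  opcomp (opadj V) V = idop T2 /\ opcomp V (opadj V) = idop T1.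

Definition unit_vector (T : finType) (x : vec T) : Prop :=
  \sum_(i : T) Num.conj (x i) * x i = 1.

(* splitting maps chi : H -> H_L (x) H_R are isometries in op (HL*HR) H *)
Definition stlocL (H HL HR : finType) (chi : op (HL * HR)%type H) (A : op H H) : Prop :=
  exists At : op HL HL,
    opcomp A (opadj chi) = opcomp (opadj chi) (optens At (idop HR)) /\
    opcomp chi A = opcomp (optens At (idop HR)) chi.
Definition stlocR (H HL HR : finType) (chi : op (HL * HR)%type H) (A : op H H) : Prop :=
  exists At : op HR HR,
    opcomp A (opadj chi) = opcomp (opadj chi) (optens (idop HL) At) /\
    opcomp chi A = opcomp (optens (idop HL) At) chi.

Definition commutant (H : finType) (S : op H H -> Prop) (B : op H H) : Prop :=
  forall A, S A -> opcomp A B = opcomp B A.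

Definition balanced (H HL HR : finType) (chi : op (HL * HR)%type H) : Prop :=
  forall B, stlocR chi B <-> commutant (stlocL chi) B.

Definition vNalgebra (H : finType) (S : op H H -> Prop) : Prop :=
  (forall A, S A -> S (opadj A)) /\
  (forall A, S A <-> commutant (commutant S) A).

Definition is_factor (H : finType) (S : op H H -> Prop) : Prop :=
  vNalgebra S /\
  (forall Z, (S Z /\ commutant S Z) <-> exists c : C, Z = scalop H c).

(* direct sums  (+)_i (H_L^i (x) H_R^i)  as sigma types *)
Definition blockT (I : finType) (TL TR : I -> finType) (i : I) : finType :=
  (TL i * TR i)%type.
Definition dsum (I : finType) (TL TR : I -> finType) : finType :=
  {i : I & blockT TL TR i}.
Definition sumL (I : finType) (TL TR : I -> finType) (p : dsum TL TR)
  : {i : I & TL i} := Tagged TL (tagged p).1.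
Definition sumR (I : finType) (TL TR : I -> finType) (p : dsum TL TR)
  : {i : I & TR i} := Tagged TR (tagged p).2.

(* the operator  (+)_i (X_i (x) 1_{H_R^i}) ; the off-diagonal blocks of
   X : L((+)_i H_L^i) are irrelevant (killed by the delta on the R-part),
   so {blockop X | X} is exactly (+)_i L(H_L^i) (x) 1. *)
Definition blockop (I : finType) (TL TR : I -> finType)
  (X : op {i : I & TL i} {i : I & TL i}) : op (dsum TL TR) (dsum TL TR) :=
  fun p q => X (sumL p) (sumL q) * (sumR p == sumR q)%:R.

Definition rep_unitary (H : finType) (S : op H H -> Prop)
  (I : finType) (TL TR : I -> finType) (U : op (dsum TL TR) H) : Prop :=
  is_unitary U /\
  forall M, (exists A, S A /\ M = opcomp U (opcomp A (opadj U))) <->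
            (exists X, M = blockop X).

Definition dsum_incl (I : finType) (TL TR : I -> finType)
  : op ({i : I & TL i} * {i : I & TR i})%type (dsum TL TR) :=
  fun r p => (r == (sumL p, sumR p))%:R.

Definition canonical_splitting (H : finType) (S : op H H -> Prop)
  (I : finType) (TL TR : I -> finType)
  (zeta : op ({i : I & TL i} * {i : I & TR i})%type H) : Prop :=
  exists U : op (dsum TL TR) H, rep_unitary S U /\ zeta = opcomp (@dsum_incl I TL TR) U.

Definition iota_phi (HL HML HMR HR : finType) (phi : vec (HML * HMR)%type)
  : op ((HL * HML) * (HMR * HR))%type (HL * HR)%type :=
  fun r s => (r.1.1 == s.1)%:R * phi (r.1.2, r.2.1) * (r.2.2 == s.2)%:R.
End HilbertOps.

From Pilot Require Import Defs.
From mathcomp Require Import all_boot all_order all_algebra.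
From mathcomp Require Import reals complex.
From mathcomp Require spectral.
From Stdlib Require Import FunctionalExtensionality Classical.
From mathcomp Require Import ring.
Set Implicit Arguments. Unset Strict Implicit. Unset Printing Implicit Defensive.
Import Order.TTheory GRing.Theory Num.Theory.
Local Open Scope ring_scope.

(* Let A = stloc_L(chi).  A minimal projection [pmin] of the factor A and a unit
   vector [xi] in its range give matrix units: for an orthonormal basis [w i] = a_i xi
   of A xi, the partial isometries [piso i] = a_i pmin satisfy piso_i^* piso_j = d_ij pmin,
   and sum_i piso_i piso_i^* is central, hence 1.  This yields a representation unitary
   U : H -> C^n (x) C^k with U A U^* = M_n (x) 1.  By balancedness the commutant
   1 (x) M_k of A lies in stloc_R(chi), so the matrix units E_(i,i0) (x) 1 and
   1 (x) E_(r,r0) are implemented on H_L^chi and H_R^chi by operators [Et i], [Ft r].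
   Hence chi(ub i r) = (Et_i (x) Ft_r) psi with psi = chi(ub i0 r0), while Et_i^* Et_j
   and Ft_r^* Ft_s act on the two supports of psi as d_ij and d_rs.  Expanding psi in
   orthonormal bases [m], [nn] of these supports gives the state [phi], and chi factors
   through the isometries U_L (i, s) = Et_i m_s and U_R (t, r) = Ft_r nn_t. *)

Section Vectors.
Variable R : realType.
Local Notation C := (C R).

Definition dot (T : finType) (x y : vec R T) : C := \sum_i Num.conj (x i) * y i.
Definition lincomb (T I : finType) (c : I -> C) (u : I -> vec R T) : vec R T :=
  fun t => \sum_i c i * u i t.
Definition orthonormal_family (T I : finType) (w : I -> vec R T) : Prop :=
  forall i j, dot (w i) (w j) = (i == j)%:R.
Definition subspace (T : finType) (P : vec R T -> Prop) : Prop :=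
  P (fun _ => 0) /\ (forall x y, P x -> P y -> P (fun i => x i + y i)) /\
  (forall c x, P x -> P (fun i => c * x i)).
Definition spans (T I : finType) (P : vec R T -> Prop) (w : I -> vec R T) : Prop :=
  (forall i, P (w i)) /\ forall x, P x -> x = lincomb (fun i => dot (w i) x) w.

Lemma dotC (T : finType) (x y : vec R T) : dot y x = Num.conj (dot x y).
Proof.
rewrite /dot rmorph_sum; apply: eq_bigr => i _.
by rewrite rmorphM /= conjCK mulrC.
Qed.

Lemma dot_ge0 (T : finType) (x : vec R T) : 0 <= dot x x.
Proof. by apply: sumr_ge0 => i _; rewrite -normCKC exprn_ge0. Qed.

Lemma dot_self_eq0 (T : finType) (x : vec R T) : dot x x = 0 -> x = (fun _ => 0).
Proof.
move=> x0; apply: functional_extensionality => i.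
have /psumr_eq0P xx0 := x0.
have /eqP := xx0 (fun i _ => ltac:(rewrite -normCKC; exact: exprn_ge0)) i isT.
by rewrite -normCKC sqrf_eq0 normr_eq0 => /eqP.
Qed.

Lemma dot_lincombr (T I : finType) (x : vec R T) (c : I -> C) u :
  dot x (lincomb c u) = \sum_i c i * dot x (u i).
Proof.
rewrite /dot /lincomb.
under eq_bigr do rewrite mulr_sumr.
rewrite exchange_big; apply: eq_bigr => i _; rewrite mulr_sumr.
by apply: eq_bigr => t _; rewrite mulrCA.
Qed.

Lemma dot_lincombl (T I : finType) (y : vec R T) (c : I -> C) u :
  dot (lincomb c u) y = \sum_i Num.conj (c i) * dot (u i) y.
Proof.
rewrite dotC dot_lincombr rmorph_sum; apply: eq_bigr => i _.
by rewrite rmorphM /= dotC conjCK.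
Qed.

Lemma dot_addr (T : finType) (x y z : vec R T) :
  dot x (fun i => y i + z i) = dot x y + dot x z.
Proof. by rewrite /dot -big_split; apply: eq_bigr => i _; rewrite mulrDr. Qed.

Lemma dot_scaler (T : finType) (x y : vec R T) c :
  dot x (fun i => c * y i) = c * dot x y.
Proof. by rewrite /dot mulr_sumr; apply: eq_bigr => i _; rewrite mulrCA. Qed.

Lemma dot_scalel (T : finType) (x y : vec R T) c :
  dot (fun i => c * x i) y = Num.conj c * dot x y.
Proof. by rewrite dotC dot_scaler rmorphM /= -dotC. Qed.

Lemma dot0r (T : finType) (x : vec R T) : dot x (fun _ => 0) = 0.
Proof. by rewrite /dot big1 // => t _; rewrite mulr0. Qed.

Lemma dot_lincomb_orthonormal (T I : finType) (w : I -> vec R T) (c : I -> C) i :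
  orthonormal_family w -> dot (w i) (lincomb c w) = c i.
Proof.
move=> ow; rewrite dot_lincombr (bigD1 i) //= ow eqxx mulr1 big1 ?addr0 // => j /negPf.
by rewrite ow eq_sym => ->; rewrite mulr0.
Qed.

Lemma dot_coords (T I : finType) (u : I -> vec R T) x y :
  x = lincomb (fun i => dot (u i) x) u ->
  dot x y = dot (fun i => dot (u i) x) (fun i => dot (u i) y).
Proof. by move=> ex; rewrite {1}ex dot_lincombl. Qed.

(* The rows of an orthonormal family form a unitary matrix, whose rank is its height. *)
Lemma orthonormal_card_le (T I : finType) (w : I -> vec R T) :
  orthonormal_family w -> (#|I| <= #|T|)%N.
Proof.
move=> ow.
pose M : 'M[C]_(#|I|, #|T|) := \matrix_(a, b) w (enum_val a) (enum_val b).
have uM : M \is spectral.unitarymx.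
  apply/eqP/matrixP => a a'; rewrite !mxE.
  transitivity (dot (w (enum_val a')) (w (enum_val a))).
    rewrite /dot (big_enum_val (A := T)) /=.
    by apply: eq_bigr => b _; rewrite !mxE mulrC.
  by rewrite ow (inj_eq enum_val_inj) eq_sym.
by rewrite -(spectral.mxrank_unitary uM) rank_leq_col.
Qed.

Lemma subspace_lincomb (T I : finType) (P : vec R T -> Prop) (c : I -> C) u :
  subspace P -> (forall i, P (u i)) -> P (lincomb c u).
Proof.
move=> [P0 [PD PZ]] Pu; rewrite /lincomb.
elim: (index_enum I) => [|i r IH].
  by under [fun t => _]functional_extensionality => t do rewrite big_nil.
under [fun t => _]functional_extensionality => t do rewrite big_cons.
exact: PD (PZ _ _ (Pu i)) IH.
Qed.

(* Gram-Schmidt step: normalize the component of [x] orthogonal to [w]. *)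
Lemma orthonormal_extend (T : finType) (P : vec R T -> Prop) k (w : 'I_k -> vec R T) x :
  subspace P -> orthonormal_family w -> (forall i, P (w i)) -> P x ->
  x <> lincomb (fun i => dot (w i) x) w ->
  exists w' : 'I_k.+1 -> vec R T, orthonormal_family w' /\ forall i, P (w' i).
Proof.
move=> sP ow Pw Px nx.
pose y := fun t => x t + (-1) * lincomb (fun i => dot (w i) x) w t.
have Py : P y.
  have := subspace_lincomb (fun i => dot (w i) x) sP Pw.
  by case: sP => [_ [PD PZ]] Pl; apply: PD => //; apply: PZ.
have wy i : dot (w i) y = 0.
  by rewrite dot_addr dot_scaler dot_lincomb_orthonormal // mulN1r subrr.
have ny : dot y y != 0.
  apply/eqP => /dot_self_eq0 y0; apply: nx; apply: functional_extensionality => t.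
  by have /eqP := congr1 (fun f => f t) y0; rewrite /y /= mulN1r subr_eq0 => /eqP.
pose c := (sqrtC (dot y y))^-1.
have c_ge0 : 0 <= c by rewrite invr_ge0 sqrtC_ge0 dot_ge0.
pose z := fun t => c * y t.
have Pz : P z by case: sP => [_ [_ PZ]]; exact: PZ.
have zz : dot z z = 1.
  rewrite dot_scalel dot_scaler (geC0_conj c_ge0) mulrA -expr2 /c exprVn sqrtCK.
  by rewrite mulVf.
have wz i : dot (w i) z = 0 by rewrite dot_scaler wy mulr0.
exists (fun i => oapp w z (unlift ord0 i)); split; last first.
  by move=> i; case: (unlift ord0 i) => [j|] /=.
move=> i j.
case: (unliftP ord0 i) => [a ->|->]; case: (unliftP ord0 j) => [b ->|->] /=.
- by rewrite ow (inj_eq lift_inj).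
- by rewrite wz.
- by rewrite dotC wz rmorph0.
- by rewrite zz.
Qed.

Lemma orthonormal_spans_or_extend (T : finType) (P : vec R T -> Prop) k
    (w : 'I_k -> vec R T) :
  subspace P -> orthonormal_family w -> (forall i, P (w i)) ->
  spans P w \/ exists w' : 'I_k.+1 -> vec R T, orthonormal_family w' /\ forall i, P (w' i).
Proof.
move=> sP ow Pw.
case: (classic (forall x, P x -> x = lincomb (fun i => dot (w i) x) w)) => [|hs].
  by left.
have [x hx] := not_all_ex_not _ _ hs.
have [Px nx] := imply_to_and _ _ hx.
by right; exact: orthonormal_extend sP ow Pw Px nx.
Qed.

Lemma subspace_onb (T : finType) (P : vec R T -> Prop) :
  subspace P -> exists k (w : 'I_k -> vec R T), orthonormal_family w /\ spans P w.
Proof.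
move=> sP.
suff ext m k (w : 'I_k -> vec R T) : orthonormal_family w -> (forall i, P (w i)) ->
    (#|T| - k <= m)%N -> exists k (w : 'I_k -> vec R T), orthonormal_family w /\ spans P w.
  by apply: (ext #|T| 0 (fun _ _ => 0)) => [[]|[]|]; rewrite ?subn0.
elim: m k w => [|m IH] k w ow Pw hk;
  case: (orthonormal_spans_or_extend sP ow Pw) => [sw|[w' [ow' Pw']]];
  try by exists k, w.
  have := orthonormal_card_le ow'; rewrite card_ord.
  by move: hk; rewrite leqn0 subn_eq0 leqNgt => /negPf ->.
by apply: (IH _ w') => //; rewrite subnS -subn1 leq_subLR add1n.
Qed.

Lemma orthonormal_spans_card (T I : finType) (P : vec R T -> Prop) (u : I -> vec R T)
   k (w : 'I_k -> vec R T) :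
  subspace P -> orthonormal_family u -> spans P u -> orthonormal_family w ->
  (forall j, P (w j)) -> (#|I| <= k)%N -> spans P w.
Proof.
move=> sP ou [Pu su] ow Pw hk.
case: (orthonormal_spans_or_extend sP ow Pw) => // -[w' [ow' Pw']].
(* The coordinates in [u] of [k.+1] orthonormal vectors of [P] are orthonormal in [C^I]. *)
have oc : orthonormal_family (fun j => fun i => dot (u i) (w' j)).
  by move=> i j; rewrite -ow' -dot_coords //; apply: su.
have := orthonormal_card_le oc; rewrite card_ord => h.
by have := leq_trans h hk; rewrite ltnn.
Qed.

End Vectors.

Section Operators.
Variable R : realType.
Local Notation C := (C R).

Definition std (T : finType) (t : T) : vec R T := fun s => (s == t)%:R.
Definition opscale (T1 T2 : finType) (c : C) (A : op R T1 T2) : op R T1 T2 :=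
  fun i j => c * A i j.
Definition opadd (T1 T2 : finType) (A B : op R T1 T2) : op R T1 T2 :=
  fun i j => A i j + B i j.
Definition opsum (T1 T2 I : finType) (F : I -> op R T1 T2) : op R T1 T2 :=
  fun i j => \sum_k F k i j.

Lemma opapply_std (T1 T2 : finType) (A : op R T1 T2) j :
  opapply A (std j) = fun i => A i j.
Proof.
apply: functional_extensionality => i; rewrite /opapply /std (bigD1 j) //= eqxx mulr1.
by rewrite big1 ?addr0 // => k /negPf ->; rewrite mulr0.
Qed.

Lemma op_ext (T1 T2 : finType) (A B : op R T1 T2) :
  (forall x, opapply A x = opapply B x) -> A = B.
Proof.
move=> AB; apply: functional_extensionality => i; apply: functional_extensionality => j.
by have := congr1 (fun f => f i) (AB (std j)); rewrite !opapply_std.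
Qed.

Lemma opapply_comp (T1 T2 T3 : finType) (A : op R T1 T2) (B : op R T2 T3) x :
  opapply (opcomp A B) x = opapply A (opapply B x).
Proof.
apply: functional_extensionality => i; rewrite /opapply /opcomp.
under eq_bigr do rewrite mulr_suml.
rewrite exchange_big; apply: eq_bigr => j _; rewrite mulr_sumr.
by apply: eq_bigr => k _; rewrite mulrA.
Qed.

Lemma opcompA (T1 T2 T3 T4 : finType) (A : op R T1 T2) (B : op R T2 T3) (D : op R T3 T4) :
  opcomp (opcomp A B) D = opcomp A (opcomp B D).
Proof. by apply: op_ext => x; rewrite !opapply_comp. Qed.

Lemma opapply_id (T : finType) (x : vec R T) : opapply (@idop R T) x = x.
Proof.
apply: functional_extensionality => i; rewrite /opapply /idop (bigD1 i) //= eqxx mul1r.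
by rewrite big1 ?addr0 // => k; rewrite eq_sym => /negPf ->; rewrite mul0r.
Qed.

Lemma opcomp1l (T1 T2 : finType) (A : op R T1 T2) : opcomp (@idop R T1) A = A.
Proof. by apply: op_ext => x; rewrite opapply_comp opapply_id. Qed.

Lemma opcomp1r (T1 T2 : finType) (A : op R T1 T2) : opcomp A (@idop R T2) = A.
Proof. by apply: op_ext => x; rewrite opapply_comp opapply_id. Qed.

Lemma opapply0 (T1 T2 : finType) (A : op R T1 T2) : opapply A (fun _ => 0) = (fun _ => 0).
Proof.
by apply: functional_extensionality => i; rewrite /opapply big1 // => j _; rewrite mulr0.
Qed.

Lemma opapply_addv (T1 T2 : finType) (A : op R T1 T2) x y :
  opapply A (fun i => x i + y i) = fun i => opapply A x i + opapply A y i.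
Proof.
apply: functional_extensionality => i; rewrite /opapply -big_split.
by apply: eq_bigr => j _; rewrite mulrDr.
Qed.

Lemma opapply_scalev (T1 T2 : finType) (A : op R T1 T2) c x :
  opapply A (fun i => c * x i) = fun i => c * opapply A x i.
Proof.
apply: functional_extensionality => i; rewrite /opapply mulr_sumr.
by apply: eq_bigr => j _; rewrite mulrCA.
Qed.

Lemma opapply_sumv (T1 T2 I : finType) (A : op R T1 T2) (F : I -> vec R T2) :
  opapply A (fun t => \sum_k F k t) = fun i => \sum_k opapply A (F k) i.
Proof.
apply: functional_extensionality => i; rewrite /opapply.
under eq_bigr do rewrite mulr_sumr.
by rewrite exchange_big.
Qed.

Lemma opapply_lincomb (T1 T2 I : finType) (A : op R T1 T2) (c : I -> C) u :
  opapply A (lincomb c u) = lincomb c (fun i => opapply A (u i)).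
Proof.
rewrite /lincomb opapply_sumv; apply: functional_extensionality => i.
by apply: eq_bigr => k _; rewrite opapply_scalev.
Qed.

Lemma scale1v (T : finType) (x : vec R T) : (fun t => 1%:R * x t) = x.
Proof. by apply: functional_extensionality => t; rewrite mul1r. Qed.

Lemma opapply_scale (T1 T2 : finType) c (A : op R T1 T2) x :
  opapply (opscale c A) x = fun i => c * opapply A x i.
Proof.
apply: functional_extensionality => i; rewrite /opapply /opscale mulr_sumr.
by apply: eq_bigr => j _; rewrite mulrA.
Qed.

Lemma opapply_add (T1 T2 : finType) (A B : op R T1 T2) x :
  opapply (opadd A B) x = fun i => opapply A x i + opapply B x i.
Proof.
apply: functional_extensionality => i; rewrite /opapply /opadd -big_split.
by apply: eq_bigr => j _; rewrite mulrDl.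
Qed.

Lemma opapply_sub (T1 T2 : finType) (A B : op R T1 T2) x :
  opapply (opadd A (opscale (-1) B)) x = fun t => opapply A x t - opapply B x t.
Proof.
rewrite opapply_add opapply_scale; apply: functional_extensionality => t.
by rewrite mulN1r.
Qed.

Lemma opapply_sum (T1 T2 I : finType) (F : I -> op R T1 T2) x :
  opapply (opsum F) x = fun i => \sum_k opapply (F k) x i.
Proof.
apply: functional_extensionality => i; rewrite /opapply /opsum exchange_big.
by apply: eq_bigr => j _; rewrite mulr_suml.
Qed.

Lemma opcomp_scalel (T1 T2 T3 : finType) c (A : op R T1 T2) (B : op R T2 T3) :
  opcomp (opscale c A) B = opscale c (opcomp A B).
Proof. by apply: op_ext => x; rewrite opapply_comp !opapply_scale opapply_comp. Qed.

Lemma opcomp_scaler (T1 T2 T3 : finType) c (A : op R T1 T2) (B : op R T2 T3) :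
  opcomp A (opscale c B) = opscale c (opcomp A B).
Proof.
by apply: op_ext => x; rewrite opapply_comp !opapply_scale opapply_comp opapply_scalev.
Qed.

Lemma opcomp_addl (T1 T2 T3 : finType) (A A' : op R T1 T2) (B : op R T2 T3) :
  opcomp (opadd A A') B = opadd (opcomp A B) (opcomp A' B).
Proof. by apply: op_ext => x; rewrite opapply_comp !opapply_add !opapply_comp. Qed.

Lemma opcomp_addr (T1 T2 T3 : finType) (A : op R T1 T2) (B B' : op R T2 T3) :
  opcomp A (opadd B B') = opadd (opcomp A B) (opcomp A B').
Proof.
by apply: op_ext => x; rewrite opapply_comp !opapply_add !opapply_comp opapply_addv.
Qed.

Lemma opsum_ext (T1 T2 I : finType) (F G : I -> op R T1 T2) :
  (forall i, F i = G i) -> opsum F = opsum G.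
Proof. by move=> FG; congr opsum; apply: functional_extensionality. Qed.

Lemma opsum_exchange (T1 T2 I J : finType) (F : I -> J -> op R T1 T2) :
  opsum (fun i => opsum (fun j => F i j)) = opsum (fun j => opsum (fun i => F i j)).
Proof.
apply: functional_extensionality => s; apply: functional_extensionality => t.
by rewrite /opsum exchange_big.
Qed.

Lemma opcomp_suml (T1 T2 T3 I : finType) (F : I -> op R T1 T2) (B : op R T2 T3) :
  opcomp (opsum F) B = opsum (fun k => opcomp (F k) B).
Proof.
apply: op_ext => x; rewrite opapply_comp !opapply_sum.
by apply: functional_extensionality => i; apply: eq_bigr => k _; rewrite opapply_comp.
Qed.

Lemma opcomp_sumr (T1 T2 T3 I : finType) (A : op R T1 T2) (F : I -> op R T2 T3) :
  opcomp A (opsum F) = opsum (fun k => opcomp A (F k)).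
Proof.
apply: op_ext => x; rewrite opapply_comp !opapply_sum opapply_sumv.
by apply: functional_extensionality => i; apply: eq_bigr => k _; rewrite opapply_comp.
Qed.

Lemma opadjK (T1 T2 : finType) (A : op R T1 T2) : opadj (opadj A) = A.
Proof.
apply: functional_extensionality => i; apply: functional_extensionality => j.
by rewrite /opadj conjCK.
Qed.

Lemma opadj_comp (T1 T2 T3 : finType) (A : op R T1 T2) (B : op R T2 T3) :
  opadj (opcomp A B) = opcomp (opadj B) (opadj A).
Proof.
apply: functional_extensionality => i; apply: functional_extensionality => j.
rewrite /opadj /opcomp rmorph_sum; apply: eq_bigr => k _.
by rewrite rmorphM /= mulrC.
Qed.

Lemma opadj_id (T : finType) : opadj (@idop R T) = @idop R T.
Proof.
apply: functional_extensionality => i; apply: functional_extensionality => j.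
by rewrite /opadj /idop conjC_nat eq_sym.
Qed.

Lemma opadj_scale (T1 T2 : finType) c (A : op R T1 T2) :
  opadj (opscale c A) = opscale (Num.conj c) (opadj A).
Proof.
apply: functional_extensionality => i; apply: functional_extensionality => j.
by rewrite /opadj /opscale rmorphM.
Qed.

Lemma opadj_sum (T1 T2 I : finType) (F : I -> op R T1 T2) :
  opadj (opsum F) = opsum (fun k => opadj (F k)).
Proof.
apply: functional_extensionality => i; apply: functional_extensionality => j.
by rewrite /opadj /opsum rmorph_sum.
Qed.

Lemma dot_adj (T1 T2 : finType) (A : op R T1 T2) x y :
  dot (opapply A x) y = dot x (opapply (opadj A) y).
Proof.
rewrite /dot /opapply /opadj.
under eq_bigr do rewrite rmorph_sum /= mulr_suml.
under [RHS]eq_bigr do rewrite mulr_sumr.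
rewrite exchange_big; apply: eq_bigr => j _; apply: eq_bigr => i _.
by rewrite rmorphM /= mulrCA mulrA.
Qed.

Lemma isometry_dot (T1 T2 : finType) (V : op R T1 T2) x y :
  is_isometry V -> dot (opapply V x) (opapply V y) = dot x y.
Proof. by move=> iV; rewrite dot_adj -opapply_comp iV opapply_id. Qed.

Lemma sum_pair (T1 T2 : finType) (F : (T1 * T2)%type -> C) :
  \sum_p F p = \sum_a \sum_b F (a, b).
Proof. by rewrite pair_bigA; apply: eq_bigr => -[]. Qed.

Definition vtens (T1 T2 : finType) (x : vec R T1) (y : vec R T2) : vec R (T1 * T2)%type :=
  fun lr => x lr.1 * y lr.2.

Lemma optens_comp (T1 T2 S1 S2 V1 V2 : finType) (A : op R T1 S1) (B : op R T2 S2)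
   (A' : op R S1 V1) (B' : op R S2 V2) :
  opcomp (optens A B) (optens A' B') = optens (opcomp A A') (opcomp B B').
Proof.
apply: functional_extensionality => i; apply: functional_extensionality => j.
rewrite /opcomp /optens big_distrlr /= pair_bigA; apply: eq_bigr => -[a b] _ /=.
by rewrite mulrACA.
Qed.

Lemma optens_adj (T1 T2 S1 S2 : finType) (A : op R T1 S1) (B : op R T2 S2) :
  opadj (optens A B) = optens (opadj A) (opadj B).
Proof.
apply: functional_extensionality => i; apply: functional_extensionality => j.
by rewrite /opadj /optens rmorphM.
Qed.

Lemma optens_vtens (T1 T2 S1 S2 : finType) (A : op R T1 S1) (B : op R T2 S2) x y :
  opapply (optens A B) (vtens x y) = vtens (opapply A x) (opapply B y).
Proof.
apply: functional_extensionality => -[l r].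
rewrite /opapply /optens /vtens big_distrlr /= pair_bigA; apply: eq_bigr => -[a b] _ /=.
by rewrite mulrACA.
Qed.

Lemma optens_idr_apply (T1 T2 S1 : finType) (A : op R T1 S1) (y : vec R (S1 * T2)%type) l r :
  opapply (optens A (@idop R T2)) y (l, r) = \sum_l' A l l' * y (l', r).
Proof.
rewrite /opapply /optens sum_pair /=; apply: eq_bigr => a _.
rewrite (bigD1 r) //= big1 ?addr0; first by rewrite /idop eqxx mulr1.
by move=> b nb; rewrite /idop eq_sym (negPf nb) mulr0 mul0r.
Qed.

Lemma optens_idl_apply (T1 T2 S2 : finType) (B : op R T2 S2) (y : vec R (T1 * S2)%type) l r :
  opapply (optens (@idop R T1) B) y (l, r) = \sum_r' B r r' * y (l, r').
Proof.
rewrite /opapply /optens sum_pair /= (bigD1 l) //= [X in _ + X]big1 ?addr0.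
  by apply: eq_bigr => b _; rewrite /idop eqxx mul1r.
by move=> a na; apply: big1 => b _; rewrite /idop eq_sym (negPf na) !mul0r.
Qed.

Lemma intertwine_adj (T1 T2 : finType) (chi : op R T1 T2) (a : op R T2 T2) (b : op R T1 T1) :
  opcomp a (opadj chi) = opcomp (opadj chi) b -> opcomp chi (opadj a) = opcomp (opadj b) chi.
Proof. by move=> /(congr1 (@opadj R _ _)); rewrite !opadj_comp opadjK. Qed.

Definition oprange (T1 T2 : finType) (M : op R T1 T2) : vec R T1 -> Prop :=
  fun x => exists y, x = opapply M y.

Lemma subspace_oprange (T1 T2 : finType) (M : op R T1 T2) : subspace (oprange M).
Proof.
split; [|split].
- by exists (fun _ => 0); rewrite opapply0.
- by move=> x y [x' ->] [y' ->]; exists (fun i => x' i + y' i); rewrite opapply_addv.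
- by move=> c x [x' ->]; exists (fun i => c * x' i); rewrite opapply_scalev.
Qed.

End Operators.
Arguments std {R T} t.

Section Projections.
Variable R : realType.
Local Notation C := (C R).
Variable T : finType.

(* Locked, as its body would otherwise match [opcomp] when rewriting. *)
Fact proj_key : unit. Proof. by []. Qed.
Definition proj (I : finType) (u : I -> vec R T) : op R T T :=
  locked_with proj_key (fun s t => \sum_i u i s * Num.conj (u i t)).

Lemma opapply_proj (I : finType) (u : I -> vec R T) x :
  opapply (proj u) x = lincomb (fun i => dot (u i) x) u.
Proof.
apply: functional_extensionality => s; rewrite /opapply /proj locked_withE /lincomb /dot.
under eq_bigr do rewrite mulr_suml.
rewrite exchange_big; apply: eq_bigr => i _; rewrite mulr_suml.
by apply: eq_bigr => t _; rewrite -mulrA mulrC.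
Qed.

Lemma proj_adj (I : finType) (u : I -> vec R T) : opadj (proj u) = proj u.
Proof.
apply: functional_extensionality => i; apply: functional_extensionality => j.
rewrite /opadj /proj locked_withE rmorph_sum; apply: eq_bigr => r _.
by rewrite rmorphM /= conjCK mulrC.
Qed.

Lemma proj_fix (I : finType) (S : vec R T -> Prop) (u : I -> vec R T) x :
  spans S u -> S x -> opapply (proj u) x = x.
Proof. by move=> [_ su] Sx; rewrite opapply_proj -su. Qed.

Lemma proj_in (I : finType) (S : vec R T -> Prop) (u : I -> vec R T) x :
  subspace S -> spans S u -> S (opapply (proj u) x).
Proof. by move=> sS [Su _]; rewrite opapply_proj; apply: subspace_lincomb. Qed.

Lemma proj_commute (I : finType) (S : vec R T -> Prop) (u : I -> vec R T) (y : op R T T) :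
  spans S u ->
  (forall v, S v -> S (opapply y v)) -> (forall v, S v -> S (opapply (opadj y) v)) ->
  opcomp y (proj u) = opcomp (proj u) y.
Proof.
move=> [Su su] yS yaS; apply: op_ext => x.
rewrite (opapply_comp y) (opapply_comp (proj u)) !opapply_proj opapply_lincomb.
apply: functional_extensionality => t; rewrite /lincomb.
have yu i : opapply y (u i) = lincomb (fun j => dot (u j) (opapply y (u i))) u.
  exact/su/yS.
under eq_bigr do rewrite yu /lincomb mulr_sumr.
rewrite exchange_big; apply: eq_bigr => j _.
rewrite -(opadjK y) -dot_adj (su _ (yaS _ (Su j))) dot_lincombl mulr_suml.
by apply: eq_bigr => i _; rewrite -dotC dot_adj opadjK; ring.
Qed.

(* Take an eigenvector of the matrix of [h] in the basis [u]. *)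
Lemma invariant_eigenvector (S : vec R T -> Prop) k (u : 'I_k -> vec R T) (h : op R T T) :
  (0 < k)%N -> subspace S -> orthonormal_family u -> spans S u ->
  (forall x, S x -> S (opapply h x)) ->
  exists l v, [/\ S v, v <> (fun _ => 0) & opapply h v = fun t => l * v t].
Proof.
move=> k_gt0 sS ou [Su su] hS.
pose X : 'M[C]_k := \matrix_(r, s) dot (u s) (opapply h (u r)).
have [l /eigenvalueP [c cX c0]] := spectral.eigenvalue_closed X k_gt0.
pose v := lincomb (fun r => c 0 r) u.
have Sv : S v by exact: subspace_lincomb.
exists l, v; split=> //.
  have [s cs] : exists s, c 0 s != 0.
    apply/existsP; apply: contraR c0 => /existsPn c_eq0.
    by apply/eqP/rowP => s; rewrite mxE; apply/eqP; apply: negbNE (c_eq0 s).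
  by move=> v0; move: cs; rewrite -(dot_lincomb_orthonormal _ _ ou) -/v v0 dot0r eqxx.
rewrite (su _ (hS _ Sv)); apply: functional_extensionality => t.
rewrite /lincomb /v mulr_sumr; apply: eq_bigr => s _.
rewrite mulrA; congr (_ * _).
have := congr1 (fun M : 'rV[C]_k => M 0 s) cX; rewrite !mxE => <-.
by rewrite opapply_lincomb dot_lincombr; apply: eq_bigr => r _; rewrite mxE.
Qed.

Lemma subspace_eigen (S : vec R T -> Prop) (h : op R T T) l :
  subspace S -> subspace (fun w => S w /\ opapply h w = fun t => l * w t).
Proof.
case=> [S0 [SD SZ]]; split; [|split].
- split => //; rewrite opapply0; apply: functional_extensionality => t; by rewrite mulr0.
- move=> x y [Sx hx] [Sy hy]; split; first exact: SD.
  rewrite opapply_addv hx hy; apply: functional_extensionality => t; by rewrite mulrDr.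
- move=> c x [Sx hx]; split; first exact: SZ.
  rewrite opapply_scalev hx; apply: functional_extensionality => t; by rewrite mulrCA.
Qed.

Section Commutant.
Variable S : op R T T -> Prop.

Lemma commutant_id : commutant S (@idop R T).
Proof. by move=> a _; rewrite opcomp1l opcomp1r. Qed.

Lemma commutant_comp x y : commutant S x -> commutant S y -> commutant S (opcomp x y).
Proof. by move=> Sx Sy a Sa; rewrite -opcompA Sx // !opcompA Sy. Qed.

Lemma commutant_add x y : commutant S x -> commutant S y -> commutant S (opadd x y).
Proof. by move=> Sx Sy a Sa; rewrite opcomp_addl opcomp_addr Sx // Sy. Qed.

Lemma commutant_scale c x : commutant S x -> commutant S (opscale c x).
Proof. by move=> Sx a Sa; rewrite opcomp_scalel opcomp_scaler Sx. Qed.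

Lemma commutant_sum (I : finType) (F : I -> op R T T) :
  (forall i, commutant S (F i)) -> commutant S (opsum F).
Proof.
move=> SF a Sa; rewrite opcomp_suml opcomp_sumr; congr opsum.
by apply: functional_extensionality => i; rewrite SF.
Qed.

Lemma commutant_adj x :
  (forall a, S a -> S (opadj a)) -> commutant S x -> commutant S (opadj x).
Proof. by move=> Sadj Sx a Sa; rewrite -[a]opadjK -!opadj_comp Sx //; apply: Sadj. Qed.

End Commutant.
End Projections.

Section FactorSpace.
Variable R : realType.
Local Notation C := (C R).
Variables n k : nat.

(* [C^n (x) C^k], as a direct sum with a single block. *)
Definition factorL := fun _ : unit => ('I_n : finType).
Definition factorR := fun _ : unit => ('I_k : finType).
Definition factor_space : finType := dsum factorL factorR.

Definition emb (x : 'I_n * 'I_k) : factor_space :=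
  existT (fun i => blockT factorL factorR i) tt x.
Definition unemb (p : factor_space) : 'I_n * 'I_k := tagged p.

Lemma embK : cancel emb unemb. Proof. by []. Qed.
Lemma unembK : cancel unemb emb. Proof. by case=> [[] x]. Qed.

Lemma eq_emb x y : (emb x == emb y) = (x == y).
Proof. exact/inj_eq/can_inj/embK. Qed.

Lemma sum_factor_space (F : factor_space -> C) :
  \sum_p F p = \sum_i \sum_r F (emb (i, r)).
Proof.
rewrite (reindex emb); last by exists unemb => x _; [exact: embK | exact: unembK].
by rewrite pair_bigA; apply: eq_bigr => -[i r].
Qed.

Definition tagL (i : 'I_n) : {x : unit & factorL x} := existT factorL tt i.
Definition tagR (r : 'I_k) : {x : unit & factorR x} := existT factorR tt r.
Definition untagL (z : {x : unit & factorL x}) : 'I_n := tagged z.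
Definition untagR (z : {x : unit & factorR x}) : 'I_k := tagged z.

Lemma eq_tagL i j : (tagL i == tagL j) = (i == j).
Proof. by apply: inj_eq; apply: (can_inj (g := untagL)). Qed.

Lemma eq_tagR r s : (tagR r == tagR s) = (r == s).
Proof. by apply: inj_eq; apply: (can_inj (g := untagR)). Qed.

Lemma sum_tagL (F : {x : unit & factorL x} -> C) : \sum_a F a = \sum_i F (tagL i).
Proof. by rewrite (reindex tagL) //; exists untagL => [x _ | [[] x] _]. Qed.

Lemma sum_tagR (F : {x : unit & factorR x} -> C) : \sum_a F a = \sum_r F (tagR r).
Proof. by rewrite (reindex tagR) //; exists untagR => [x _ | [[] x] _]. Qed.

Definition lift_pair (M : op R ('I_n * 'I_k)%type ('I_n * 'I_k)%type) :
  op R factor_space factor_space := fun p q => M (unemb p) (unemb q).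

Lemma lift_pair_comp M N : opcomp (lift_pair M) (lift_pair N) = lift_pair (opcomp M N).
Proof.
apply: functional_extensionality => p; apply: functional_extensionality => q.
rewrite /opcomp /lift_pair sum_factor_space pair_bigA.
by apply: eq_bigr => -[i r] _.
Qed.

Lemma lift_pair_adj M : opadj (lift_pair M) = lift_pair (opadj M).
Proof. by []. Qed.

Definition mxL (X : op R 'I_n 'I_n) : op R ('I_n * 'I_k)%type ('I_n * 'I_k)%type :=
  fun a b => X a.1 b.1 * (a.2 == b.2)%:R.
Definition mxR (Y : op R 'I_k 'I_k) : op R ('I_n * 'I_k)%type ('I_n * 'I_k)%type :=
  fun a b => (a.1 == b.1)%:R * Y a.2 b.2.

Lemma mxL_mxR_commute X Y : opcomp (mxL X) (mxR Y) = opcomp (mxR Y) (mxL X).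
Proof.
apply: functional_extensionality => a; apply: functional_extensionality => b.
rewrite /opcomp /mxL /mxR !sum_pair /=.
rewrite (bigD1 b.1) //= [X in _ + X = _]big1 ?addr0; last first.
  by move=> i ni; apply: big1 => j _; rewrite (negPf ni) /= !(mul0r, mulr0).
rewrite (bigD1 a.2) //= [X in _ + X = _]big1 ?addr0; last first.
  by move=> j nj; rewrite eq_sym (negPf nj) /= !(mul0r, mulr0).
rewrite [RHS](bigD1 a.1) //= [X in _ = _ + X]big1 ?addr0; last first.
  by move=> i ni; apply: big1 => j _; rewrite eq_sym (negPf ni) /= !(mul0r, mulr0).
rewrite [RHS](bigD1 b.2) //= [X in _ = _ + X]big1 ?addr0; last first.
  by move=> j nj; rewrite (negPf nj) /= !(mul0r, mulr0).
by rewrite !eqxx; ring.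
Qed.

Lemma blockop_lift (X : op R {i : unit & factorL i} {i : unit & factorL i}) :
  blockop X = lift_pair (mxL (fun i j => X (tagL i) (tagL j))).
Proof.
apply: functional_extensionality => p; apply: functional_extensionality => q.
rewrite /blockop /lift_pair /mxL -(unembK p) -(unembK q).
case: (unemb p) => i r; case: (unemb q) => j s.
by rewrite !embK /= -[_ == _]/(tagR r == tagR s) eq_tagR.
Qed.

End FactorSpace.

Section FactorStructure.
Variable R : realType.
Variables (H : finType) (A : op R H H -> Prop).
Hypothesis Aadj : forall a, A a -> A (opadj a).
Hypothesis Abic : forall a, A a <-> commutant (commutant A) a.
Hypothesis Acent : forall Z, (A Z /\ commutant A Z) <-> exists c, Z = @scalop R H c.

Lemma alg_id : A (@idop R H).
Proof. exact/Abic/commutant_id. Qed.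
Lemma alg_comp x y : A x -> A y -> A (opcomp x y).
Proof. by move=> /Abic Ax /Abic Ay; apply/Abic; apply: commutant_comp. Qed.
Lemma alg_add x y : A x -> A y -> A (opadd x y).
Proof. by move=> /Abic Ax /Abic Ay; apply/Abic; apply: commutant_add. Qed.
Lemma alg_scale c x : A x -> A (opscale c x).
Proof. by move=> /Abic Ax; apply/Abic; apply: commutant_scale. Qed.
Lemma alg_sum (I : finType) (F : I -> op R H H) : (forall i, A (F i)) -> A (opsum F).
Proof. by move=> AF; apply/Abic; apply: commutant_sum => i; apply/Abic. Qed.

Definition invariant_space (S : vec R H -> Prop) : Prop :=
  [/\ subspace S, forall y, commutant A y -> forall v, S v -> S (opapply y v)
    & exists v, S v /\ v <> (fun _ => 0)].

Definition minimal_invariant S k (u : 'I_k -> vec R H) : Prop :=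
  [/\ invariant_space S, orthonormal_family u, spans S u
    & forall S' k' (u' : 'I_k' -> vec R H),
        invariant_space S' -> orthonormal_family u' -> spans S' u' -> (k <= k')%N].

Lemma minimal_invariant_exists (h0 : H) : exists S k u, @minimal_invariant S k u.
Proof.
have [k0 [u0 [ou0 su0]]] := @subspace_onb R H (fun _ => True) ltac:(by []).
suff: forall k, (exists S (u : 'I_k -> vec R H),
                   [/\ invariant_space S, orthonormal_family u & spans S u]) ->
         exists S k u, @minimal_invariant S k u.
  apply; exists (fun _ => True), u0; split=> //; split=> //.
  exists (std h0); split=> // /(congr1 (fun f => f h0)) /eqP.
  by rewrite /std eqxx oner_eq0.
elim/ltn_ind => k IH [S [u [iS ou su]]].
case: (classic (exists S' k' (u' : 'I_k' -> vec R H),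
   [/\ invariant_space S', orthonormal_family u', spans S' u' & (k' < k)%N])).
  by move=> [S' [k' [u' [iS' ou' su' lt]]]]; apply: (IH k' lt); exists S', u'.
move=> hn; exists S, k, u; split=> // S' k' u' iS' ou' su'.
by rewrite leqNgt; apply/negP => lt; apply: hn; exists S', k', u'.
Qed.

Section MinimalProjection.
Variables (S : vec R H -> Prop) (k : nat) (u : 'I_k -> vec R H).
Hypothesis mS : minimal_invariant S u.

Let iS : invariant_space S. Proof. by case: mS. Qed.
Let sS : subspace S. Proof. by case: iS. Qed.
Let ou : orthonormal_family u. Proof. by case: mS. Qed.
Let su : spans S u. Proof. by case: mS. Qed.

Definition pmin := proj u.

Lemma pmin_in_alg : A pmin.
Proof.
apply/Abic => y Ay; have [_ yS _] := iS.
by apply: (proj_commute su); apply: yS => //; apply: commutant_adj.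
Qed.

Lemma minimal_dim_gt0 : (0 < k)%N.
Proof.
case: iS => _ _ [v [Sv nv]]; rewrite lt0n; apply/eqP => k0.
apply: nv; rewrite (proj2 su _ Sv); apply: functional_extensionality => t.
by rewrite /lincomb big1 // => i; have := ltn_ord i; rewrite {2}k0.
Qed.

Lemma pmin_fix x : S x -> opapply pmin x = x.
Proof. exact: proj_fix su. Qed.
Lemma pmin_in x : S (opapply pmin x).
Proof. exact: proj_in sS su. Qed.
Lemma pmin_adj : opadj pmin = pmin.
Proof. exact: proj_adj. Qed.
Lemma pmin_idem : opcomp pmin pmin = pmin.
Proof. by apply: op_ext => x; rewrite opapply_comp pmin_fix //; apply: pmin_in. Qed.
Lemma pmin_u r : opapply pmin (u r) = u r.
Proof. by apply: pmin_fix; case: su. Qed.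

Lemma invariant_sub_minimal S' : invariant_space S' -> (forall x, S' x -> S x) ->
  forall x, S x -> S' x.
Proof.
move=> iS' S'S; have [sS' _ _] := iS'.
have [k' [w [ow [S'w sw]]]] := subspace_onb sS'.
have [_ _ _ minS] := mS.
have swS : spans S w.
  apply: (orthonormal_spans_card sS ou su ow) => [j|]; first exact/S'S/S'w.
  by rewrite card_ord; apply: minS iS' ow _.
by move=> x Sx; rewrite (proj2 swS _ Sx); apply: subspace_lincomb.
Qed.

(* The compression of [a] to [S] has an eigenspace which is invariant under the
   commutant, hence all of [S] by minimality. *)
Lemma pmin_compress_scalar a : A a -> exists l, opcomp pmin (opcomp a pmin) = opscale l pmin.
Proof.
move=> Aa; pose h := opcomp pmin (opcomp a pmin).
have Ah : A h by apply: alg_comp; [exact: pmin_in_alg | apply: alg_comp => //; exact: pmin_in_alg].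
have hS x : S x -> S (opapply h x) by rewrite /h opapply_comp => _; apply: pmin_in.
have [l [v [Sv nv hv]]] := invariant_eigenvector minimal_dim_gt0 sS ou su hS.
pose E := fun w => S w /\ opapply h w = fun t => l * w t.
have iE : invariant_space E.
  split; [exact: subspace_eigen | | by exists v].
  move=> y Ay w [Sw hw]; split; first by have [_ yS _] := iS; apply: yS.
  by rewrite -opapply_comp (Ay _ Ah) opapply_comp hw opapply_scalev.
have SE := invariant_sub_minimal iE (fun x => @proj1 _ _).
exists l; apply: op_ext => z; rewrite opapply_scale.
have -> : opapply h z = opapply h (opapply pmin z).
  by rewrite /h !opapply_comp (pmin_fix (pmin_in z)).
by have [_ ->] := SE _ (pmin_in z).
Qed.

Definition xi := u (Ordinal minimal_dim_gt0).

Lemma pmin_xi : opapply pmin xi = xi.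
Proof. exact: pmin_u. Qed.
Lemma dot_xi : dot xi xi = 1.
Proof. by rewrite /xi ou eqxx. Qed.

Lemma pmin_compress a : A a ->
  opcomp pmin (opcomp a pmin) = opscale (dot xi (opapply a xi)) pmin.
Proof.
move=> Aa; have [l al] := pmin_compress_scalar Aa; rewrite al; congr opscale.
have := congr1 (fun M => dot xi (opapply M xi)) al => /=.
rewrite opapply_scale dot_scaler pmin_xi dot_xi mulr1 => <-.
by rewrite !opapply_comp pmin_xi -{1}pmin_adj -dot_adj pmin_xi.
Qed.

(* [pmin D^* D pmin] is [|D xi|^2] times [pmin]. *)
Lemma alg_pmin_eq0 D : A D -> opcomp D pmin = D -> opapply D xi = (fun _ => 0) ->
  forall x, opapply D x = (fun _ => 0).
Proof.
move=> AD De Dxi x; apply: dot_self_eq0.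
have DD : opcomp pmin (opcomp (opcomp (opadj D) D) pmin) = opscale 0 pmin.
  rewrite pmin_compress; last by apply: alg_comp => //; apply: Aadj.
  by rewrite opapply_comp Dxi opapply0 dot0r.
rewrite -De opapply_comp dot_adj -opapply_comp -{1}pmin_adj dot_adj opadjK.
rewrite -!opapply_comp opcompA DD opapply_scale.
by rewrite /dot big1 // => t _; rewrite mul0r mulr0.
Qed.

Definition cyclic_space : vec R H -> Prop := fun x => exists a, A a /\ x = opapply a xi.

Lemma subspace_cyclic : subspace cyclic_space.
Proof.
split; [|split].
- exists (opscale 0 (@idop R H)); split; first exact/alg_scale/alg_id.
  by rewrite opapply_scale; apply: functional_extensionality => t; rewrite mul0r.
- move=> x y [a [Aa ->]] [b [Ab ->]]; exists (opadd a b); split; first exact: alg_add.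
  by rewrite opapply_add.
- move=> c x [a [Aa ->]]; exists (opscale c a); split; first exact: alg_scale.
  by rewrite opapply_scale.
Qed.

Section MatrixUnits.
Variables (n : nat) (w : 'I_n -> vec R H) (aa : 'I_n -> op R H H).
Hypotheses (ow : orthonormal_family w) (sw : spans cyclic_space w).
Hypotheses (Aaa : forall i, A (aa i)) (waa : forall i, w i = opapply (aa i) xi).

Definition piso i := opcomp (aa i) pmin.

Lemma alg_piso i : A (piso i).
Proof. by apply: alg_comp => //; exact: pmin_in_alg. Qed.

Lemma piso_xi i : opapply (piso i) xi = w i.
Proof. by rewrite /piso opapply_comp pmin_xi waa. Qed.

Lemma piso_pmin i : opcomp (piso i) pmin = piso i.
Proof. by rewrite /piso opcompA pmin_idem. Qed.

Lemma piso_adj_piso i j : opcomp (opadj (piso i)) (piso j) = opscale (i == j)%:R pmin.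
Proof.
have -> : opcomp (opadj (piso i)) (piso j) =
    opcomp pmin (opcomp (opcomp (opadj (aa i)) (aa j)) pmin).
  by rewrite /piso opadj_comp pmin_adj !opcompA.
rewrite pmin_compress; last by apply: alg_comp => //; apply: Aadj.
by rewrite opapply_comp -dot_adj -!waa ow.
Qed.

Lemma comp_piso a i : A a ->
  opcomp a (piso i) = opsum (fun j => opscale (dot (w j) (opapply a (w i))) (piso j)).
Proof.
move=> Aa; set G := opsum _.
pose D := opadd (opcomp a (piso i)) (opscale (-1) G).
have AD : A D.
  apply: alg_add; first by apply: alg_comp => //; exact: alg_piso.
  by apply/alg_scale/alg_sum => j; apply/alg_scale/alg_piso.
have De : opcomp D pmin = D.
  rewrite /D opcomp_addl opcomp_scalel /G opcomp_suml opcompA piso_pmin.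
  congr (opadd _ (opscale _ _)); apply: opsum_ext => j.
  by rewrite opcomp_scalel piso_pmin.
have Dxi : opapply D xi = fun _ => 0.
  rewrite /D opapply_sub opapply_comp piso_xi /G opapply_sum.
  have Aw : cyclic_space (opapply a (w i)).
    by exists (opcomp a (aa i)); split; [apply: alg_comp | rewrite opapply_comp waa].
  rewrite {1}(proj2 sw _ Aw); apply: functional_extensionality => t.
  apply/eqP; rewrite /lincomb subr_eq0; apply/eqP; apply: eq_bigr => j _.
  by rewrite opapply_scale piso_xi.
apply: op_ext => x; have := alg_pmin_eq0 AD De Dxi x; rewrite /D opapply_sub.
move=> D0; apply: functional_extensionality => t.
by have /eqP := congr1 (fun f => f t) D0; rewrite subr_eq0 => /eqP.
Qed.

Definition piso_ranges := opsum (fun i => opcomp (piso i) (opadj (piso i))).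

Lemma alg_piso_ranges : A piso_ranges.
Proof. by apply: alg_sum => i; apply: alg_comp; [exact: alg_piso | apply/Aadj/alg_piso]. Qed.

Lemma piso_ranges_commute a : A a -> opcomp a piso_ranges = opcomp piso_ranges a.
Proof.
move=> Aa; rewrite /piso_ranges opcomp_sumr opcomp_suml.
have -> : (fun i => opcomp a (opcomp (piso i) (opadj (piso i)))) =
   (fun i => opsum (fun j => opscale (dot (w j) (opapply a (w i)))
                                      (opcomp (piso j) (opadj (piso i))))).
  apply: functional_extensionality => i; rewrite -opcompA comp_piso // opcomp_suml.
  by apply: opsum_ext => j; rewrite opcomp_scalel.
have -> : (fun i => opcomp (opcomp (piso i) (opadj (piso i))) a) =
   (fun i => opsum (fun j => opscale (Num.conj (dot (w j) (opapply (opadj a) (w i))))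
                                      (opcomp (piso i) (opadj (piso j))))).
  apply: functional_extensionality => i.
  rewrite opcompA -[a in opcomp (opadj (piso i)) a]opadjK -opadj_comp comp_piso; last exact: Aadj.
  rewrite opadj_sum opcomp_sumr; apply: opsum_ext => j.
  by rewrite opadj_scale opcomp_scaler.
rewrite opsum_exchange; apply: opsum_ext => i; apply: opsum_ext => j.
by congr opscale; rewrite -dotC dot_adj opadjK.
Qed.

Lemma cyclic_dim_gt0 : (0 < n)%N.
Proof.
rewrite lt0n; apply/eqP => n0.
have Axi : cyclic_space xi by exists (@idop R H); split; [exact: alg_id | rewrite opapply_id].
have := dot_xi; rewrite {2}(proj2 sw _ Axi).
have -> : lincomb (fun i => dot (w i) xi) w = (fun _ => 0).
  apply: functional_extensionality => t; rewrite /lincomb big1 // => i.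
  by have := ltn_ord i; rewrite {2}n0.
by rewrite dot0r => /eqP; rewrite eq_sym oner_eq0.
Qed.

Lemma piso_adj_w i j : opapply (opadj (piso i)) (w j) = fun t => (i == j)%:R * xi t.
Proof. by rewrite -piso_xi -opapply_comp piso_adj_piso opapply_scale pmin_xi. Qed.

(* [piso_ranges] is central and fixes [w i], so the factor hypothesis makes it [1]. *)
Lemma piso_ranges_id : piso_ranges = @idop R H.
Proof.
have [c ranges_scalar] : exists c, piso_ranges = @scalop R H c.
  by apply/Acent; split; [exact: alg_piso_ranges | move=> a Aa; rewrite piso_ranges_commute].
pose i0 : 'I_n := Ordinal cyclic_dim_gt0.
have ranges_w : opapply piso_ranges (w i0) = w i0.
  rewrite /piso_ranges opapply_sum; apply: functional_extensionality => t.
  rewrite (bigD1 i0) //= big1 ?addr0.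
    by rewrite opapply_comp piso_adj_w eqxx opapply_scalev piso_xi mul1r.
  by move=> i ni; rewrite opapply_comp piso_adj_w (negPf ni) opapply_scalev mul0r.
have c1 : c = 1.
  have : opapply piso_ranges (w i0) = fun t => c * w i0 t.
    rewrite ranges_scalar; apply: functional_extensionality => t.
    rewrite /opapply /scalop (bigD1 t) //= eqxx mulr1 big1 ?addr0 // => s /negPf.
    by rewrite eq_sym => ->; rewrite mulr0 mul0r.
  rewrite ranges_w => /(congr1 (fun x => dot (w i0) x)).
  by rewrite dot_scaler ow eqxx mulr1.
rewrite ranges_scalar c1; apply: functional_extensionality => s; apply: functional_extensionality => t.
by rewrite /scalop mul1r.
Qed.

Definition fbasis i r := opapply (piso i) (u r).
Definition fbasis_at (p : factor_space n k) := fbasis (unemb p).1 (unemb p).2.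
Definition factor_unitary : op R (factor_space n k) H := fun p h => Num.conj (fbasis_at p h).

Lemma dot_fbasis i r j s : dot (fbasis i r) (fbasis j s) = (i == j)%:R * (r == s)%:R.
Proof. by rewrite dot_adj -opapply_comp piso_adj_piso opapply_scale dot_scaler pmin_u ou. Qed.

Lemma piso_adj_fbasis i j s : opapply (opadj (piso i)) (fbasis j s) = fun t => (i == j)%:R * u s t.
Proof. by rewrite /fbasis -opapply_comp piso_adj_piso opapply_scale pmin_u. Qed.

Lemma factor_unitary_unitary : Defs.is_unitary factor_unitary.
Proof.
split.
  rewrite -piso_ranges_id; apply: op_ext => x; rewrite opapply_comp /piso_ranges opapply_sum.
  apply: functional_extensionality => h.
  have -> : opapply factor_unitary x = fun p => dot (fbasis_at p) x by [].
  rewrite {1}/opapply /opadj /factor_unitary sum_factor_space; apply: eq_bigr => i _.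
  rewrite opapply_comp -{1}piso_pmin opapply_comp opapply_proj opapply_lincomb /lincomb.
  apply: eq_bigr => r _; rewrite conjCK /fbasis_at embK /= mulrC; congr (_ * _).
  by rewrite /fbasis dot_adj.
apply: functional_extensionality => p; apply: functional_extensionality => q.
rewrite /opcomp /factor_unitary /opadj /idop.
transitivity (dot (fbasis_at p) (fbasis_at q)).
  by rewrite /dot; apply: eq_bigr => h _; rewrite conjCK.
rewrite -(unembK p) -(unembK q) eq_emb /fbasis_at !embK.
case: (unemb p) => i r; case: (unemb q) => j s /=.
by rewrite dot_fbasis xpair_eqE; case: (i == j); case: (r == s); rewrite /= ?mulr1 ?mulr0.
Qed.

Lemma conj_factor_unitary (M : op R H H) p q :
  opcomp factor_unitary (opcomp M (opadj factor_unitary)) p q =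
  dot (fbasis_at p) (opapply M (fbasis_at q)).
Proof.
rewrite /opcomp /dot /factor_unitary /opadj /opapply; apply: eq_bigr => h _; congr (_ * _).
by apply: eq_bigr => h' _; rewrite conjCK.
Qed.

Lemma dot_fbasis_alg a i r j s : A a ->
  dot (fbasis i r) (opapply a (fbasis j s)) =
  dot xi (opapply (opcomp (opadj (aa i)) (opcomp a (aa j))) xi) * (r == s)%:R.
Proof.
move=> Aa; rewrite {1}/fbasis dot_adj /fbasis -!opapply_comp opcompA.
have -> : opcomp (opadj (piso i)) (opcomp a (piso j)) =
    opcomp pmin (opcomp (opcomp (opadj (aa i)) (opcomp a (aa j))) pmin).
  by rewrite /piso opadj_comp pmin_adj !opcompA.
rewrite pmin_compress; last by apply: alg_comp; [apply: Aadj | apply: alg_comp].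
by rewrite opapply_scale dot_scaler pmin_u ou.
Qed.

Lemma factor_unitary_rep : rep_unitary A factor_unitary.
Proof.
split; first exact: factor_unitary_unitary.
move=> M; split.
  move=> [a [Aa ->]].
  pose r0 := Ordinal minimal_dim_gt0.
  exists (fun p1 p2 => dot (fbasis (untagL p1) r0) (opapply a (fbasis (untagL p2) r0))).
  apply: functional_extensionality => p; apply: functional_extensionality => q.
  rewrite conj_factor_unitary -(unembK p) -(unembK q).
  case: (unemb p) => i r; case: (unemb q) => j s.
  rewrite /fbasis_at !embK /blockop /= !dot_fbasis_alg // eqxx mulr1.
  by rewrite eq_tagR.
move=> [X ->].
pose a := opsum (fun i => opsum (fun j =>
  opscale (X (tagL i) (tagL j)) (opcomp (piso i) (opadj (piso j))))).
exists a; split.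
  apply: alg_sum => i; apply: alg_sum => j; apply/alg_scale/alg_comp; first exact: alg_piso.
  exact/Aadj/alg_piso.
have aE j s : opapply a (fbasis j s) = lincomb (fun i => X (tagL i) (tagL j)) (fbasis ^~ s).
  rewrite /a opapply_sum; apply: functional_extensionality => t.
  rewrite /lincomb; apply: eq_bigr => i _; rewrite opapply_sum (bigD1 j) //= big1 ?addr0.
    by rewrite opapply_scale opapply_comp piso_adj_fbasis eqxx opapply_scalev mul1r.
  move=> l nl; rewrite opapply_scale opapply_comp piso_adj_fbasis (negPf nl) opapply_scalev.
  by rewrite mul0r mulr0.
apply: functional_extensionality => p; apply: functional_extensionality => q.
rewrite conj_factor_unitary -(unembK p) -(unembK q).
case: (unemb p) => i r; case: (unemb q) => j s.
rewrite /fbasis_at !embK /blockop /= aE dot_lincombr (bigD1 i) //= dot_fbasis eqxx mul1r.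
rewrite big1 ?addr0; first by rewrite eq_tagR.
by move=> l nl; rewrite dot_fbasis eq_sym (negPf nl) mul0r mulr0.
Qed.

End MatrixUnits.
End MinimalProjection.

Theorem factor_rep_unitary (h0 : H) :
  exists n k (U : op R (factor_space n k) H), rep_unitary A U.
Proof.
have [S [k [u mS]]] := minimal_invariant_exists h0.
have [n [w [ow sw]]] := subspace_onb (subspace_cyclic mS).
have /fin_all_exists [aa waa] : forall i, exists a, A a /\ w i = opapply a (xi mS).
  by move=> i; apply: (proj1 sw).
exists n, k, (factor_unitary u aa).
by apply: (factor_unitary_rep (mS := mS) (w := w)) => // i; case: (waa i).
Qed.

End FactorStructure.

Section UnitaryCoordinates.
Variable R : realType.
Variables (H D : finType) (U : op R D H).
Hypothesis Uu : Defs.is_unitary U.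

Definition ubasis (p : D) : vec R H := opapply (opadj U) (std p).

Lemma opapply_adj_lincomb (c : vec R D) : opapply (opadj U) c = lincomb c ubasis.
Proof.
apply: functional_extensionality => h; rewrite /opapply /lincomb; apply: eq_bigr => p _.
by rewrite mulrC /ubasis opapply_std.
Qed.

Lemma opapply_dot_ubasis x : opapply U x = fun p => dot (ubasis p) x.
Proof.
apply: functional_extensionality => p; rewrite /opapply /dot; apply: eq_bigr => h _.
by rewrite /ubasis opapply_std /opadj conjCK.
Qed.

Lemma unitary_ubasis p : opapply U (ubasis p) = std p.
Proof. by rewrite /ubasis -opapply_comp (proj2 Uu) opapply_id. Qed.

Lemma ubasis_orthonormal : orthonormal_family ubasis.
Proof.
move=> p q; rewrite -[ubasis q]/(opapply (opadj U) (std q)) -dot_adj unitary_ubasis.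
rewrite /dot (bigD1 p) //= /std eqxx conjC1 mul1r big1 ?addr0 // => s /negPf ->.
by rewrite conjC0 mul0r.
Qed.

Lemma ubasis_expand x : x = lincomb (fun p => dot (ubasis p) x) ubasis.
Proof.
by rewrite -opapply_adj_lincomb -opapply_dot_ubasis -opapply_comp (proj1 Uu) opapply_id.
Qed.

Lemma conj_unitary_ubasis (N : op R D D) q :
  opapply (opcomp (opadj U) (opcomp N U)) (ubasis q) = lincomb (fun p => N p q) ubasis.
Proof. by rewrite !opapply_comp unitary_ubasis opapply_std opapply_adj_lincomb. Qed.

Lemma conj_unitaryK a : opcomp (opadj U) (opcomp (opcomp U (opcomp a (opadj U))) U) = a.
Proof.
rewrite (opcompA U) -(opcompA (opadj U) U) (proj1 Uu) opcomp1l.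
by rewrite opcompA (proj1 Uu) opcomp1r.
Qed.

Lemma conj_unitary_comp (M N : op R D D) :
  opcomp (opcomp (opadj U) (opcomp M U)) (opcomp (opadj U) (opcomp N U)) =
  opcomp (opadj U) (opcomp (opcomp M N) U).
Proof.
apply: op_ext => x; rewrite !opapply_comp.
by rewrite -(opapply_comp U (opadj U)) (proj2 Uu) opapply_id.
Qed.

End UnitaryCoordinates.

Section BalancedSplitting.
Variable R : realType.
Local Notation C := (C R).
Variables (H HLc HRc : finType) (chi : op R (HLc * HRc)%type H).
Local Notation A := (stlocL chi).
Variables (n k : nat) (U : op R (factor_space n k) H).
Hypothesis Urep : rep_unitary A U.
Let Uu : Defs.is_unitary U. Proof. by case: Urep. Qed.

Definition unitL (i j : 'I_n) : op R H H :=
  opcomp (opadj U) (opcomp (lift_pair (mxL (k := k) (fun a b => ((a == i) && (b == j))%:R))) U).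
Definition unitR (r s : 'I_k) : op R H H :=
  opcomp (opadj U) (opcomp (lift_pair (mxR (n := n) (fun a b => ((a == r) && (b == s))%:R))) U).
Definition ub (i : 'I_n) (r : 'I_k) : vec R H := ubasis U (emb (i, r)).

Lemma unitL_in_alg i j : A (unitL i j).
Proof.
pose X := fun p1 p2 => ((untagL p1 == i) && (untagL p2 == j))%:R : C.
have [a [Aa UaU]] := proj2 (proj2 Urep (blockop X)) (ex_intro _ X erefl).
have -> : unitL i j = opcomp (opadj U) (opcomp (blockop X) U) by rewrite blockop_lift.
by rewrite UaU conj_unitaryK.
Qed.

Lemma unitR_commutant r s : commutant A (unitR r s).
Proof.
move=> a Aa.
have [X UaU] := proj1 (proj2 Urep (opcomp U (opcomp a (opadj U)))) (ex_intro _ a (conj Aa erefl)).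
rewrite -(conj_unitaryK Uu a) UaU blockop_lift /unitR.
by rewrite !conj_unitary_comp // !lift_pair_comp mxL_mxR_commute.
Qed.

Lemma lincomb_ub (F : factor_space n k -> C) (t : H) :
  lincomb F (ubasis U) t = \sum_i \sum_r F (emb (i, r)) * ub i r t.
Proof. by rewrite /lincomb sum_factor_space. Qed.

Definition zeta : op R ({x : unit & factorL n x} * {x : unit & factorR k x})%type H :=
  opcomp (dsum_incl R (TL := factorL n) (TR := factorR k)) U.

Lemma zeta_apply x i r : opapply zeta x (tagL i, tagR r) = dot (ub i r) x.
Proof.
rewrite opapply_comp (opapply_dot_ubasis U) {1}/opapply /dsum_incl sum_factor_space.
rewrite (bigD1 i) //= [X in _ + X]big1 ?addr0; last first.
  move=> i' ni; apply: big1 => r' _.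
  rewrite xpair_eqE eq_tagL.
  by rewrite eq_sym (negPf ni) mul0r.
rewrite (bigD1 r) //= [X in _ + X]big1 ?addr0; last first.
  move=> r' nr.
  by rewrite xpair_eqE eqxx eq_tagR eq_sym (negPf nr) mul0r.
by rewrite eqxx mul1r.
Qed.

Lemma unitL_apply i j i' r : opapply (unitL i j) (ub i' r) = fun t => (j == i')%:R * ub i r t.
Proof.
rewrite /unitL /ub conj_unitary_ubasis //; apply: functional_extensionality => t.
rewrite lincomb_ub (bigD1 i) //= [X in _ + X]big1 ?addr0; last first.
  move=> a na; apply: big1 => s _.
  by rewrite /lift_pair /mxL !embK /= (negPf na) /= !mul0r.
rewrite (bigD1 r) //= [X in _ + X]big1 ?addr0; last first.
  by move=> s ns; rewrite /lift_pair /mxL !embK /= eq_sym (negPf ns) !mulr0 mul0r.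
by rewrite /lift_pair /mxL !embK /= !eqxx /= eq_sym mulr1.
Qed.

Lemma unitR_apply r s i r' : opapply (unitR r s) (ub i r') = fun t => (s == r')%:R * ub i r t.
Proof.
rewrite /unitR /ub conj_unitary_ubasis //; apply: functional_extensionality => t.
rewrite lincomb_ub (bigD1 i) //= [X in _ + X]big1 ?addr0; last first.
  move=> a na; apply: big1 => s' _.
  by rewrite /lift_pair /mxR !embK /= (negPf na) /= !mul0r.
rewrite (bigD1 r) //= [X in _ + X]big1 ?addr0; last first.
  by move=> s' ns; rewrite /lift_pair /mxR !embK /= (negPf ns) !mulr0 mul0r.
by rewrite /lift_pair /mxR !embK /= !eqxx /= eq_sym mul1r.
Qed.

Variables (i0 : 'I_n) (r0 : 'I_k).
Variables (Et : 'I_n -> op R HLc HLc) (Ft : 'I_k -> op R HRc HRc).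
Hypothesis hE : forall i,
  opcomp (unitL i i0) (opadj chi) = opcomp (opadj chi) (optens (Et i) (@idop R HRc)) /\
  opcomp chi (unitL i i0) = opcomp (optens (Et i) (@idop R HRc)) chi.
Hypothesis hF : forall r,
  opcomp (unitR r r0) (opadj chi) = opcomp (opadj chi) (optens (@idop R HLc) (Ft r)) /\
  opcomp chi (unitR r r0) = opcomp (optens (@idop R HLc) (Ft r)) chi.

Lemma ub_unit i r : ub i r = opapply (unitL i i0) (opapply (unitR r r0) (ub i0 r0)).
Proof.
by rewrite unitR_apply eqxx scale1v unitL_apply eqxx scale1v.
Qed.

Lemma chi_unitL i x :
  opapply chi (opapply (unitL i i0) x) = opapply (optens (Et i) (@idop R HRc)) (opapply chi x).
Proof. by rewrite -!opapply_comp (proj2 (hE i)). Qed.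

Lemma chi_unitR r x :
  opapply chi (opapply (unitR r r0) x) = opapply (optens (@idop R HLc) (Ft r)) (opapply chi x).
Proof. by rewrite -!opapply_comp (proj2 (hF r)). Qed.

Lemma unitL_adj i j : opadj (unitL i j) = unitL j i.
Proof.
rewrite /unitL !opadj_comp opadjK lift_pair_adj opcompA.
congr (opcomp _ (opcomp (lift_pair _) _)).
apply: functional_extensionality => a; apply: functional_extensionality => b.
rewrite /opadj /mxL rmorphM /= !conjC_nat; congr (_ * _); congr (_ %:R).
  by rewrite eq_sym andbC.
by rewrite eq_sym.
Qed.

Lemma unitR_adj r s : opadj (unitR r s) = unitR s r.
Proof.
rewrite /unitR !opadj_comp opadjK lift_pair_adj opcompA.
congr (opcomp _ (opcomp (lift_pair _) _)).
apply: functional_extensionality => a; apply: functional_extensionality => b.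
rewrite /opadj /mxR rmorphM /= !conjC_nat; congr (_ * _); congr (_ %:R).
  by rewrite eq_sym.
by rewrite eq_sym andbC.
Qed.

Lemma chi_unitL_adj i x :
  opapply chi (opapply (unitL i0 i) x) =
  opapply (optens (opadj (Et i)) (@idop R HRc)) (opapply chi x).
Proof.
rewrite -unitL_adj -!opapply_comp (intertwine_adj (proj1 (hE i))).
by rewrite optens_adj opadj_id.
Qed.

Lemma chi_unitR_adj r x :
  opapply chi (opapply (unitR r0 r) x) =
  opapply (optens (@idop R HLc) (opadj (Ft r))) (opapply chi x).
Proof.
rewrite -unitR_adj -!opapply_comp (intertwine_adj (proj1 (hF r))).
by rewrite optens_adj opadj_id.
Qed.

Definition psi := opapply chi (ub i0 r0).

Lemma chi_ub i r : opapply chi (ub i r) = opapply (optens (Et i) (Ft r)) psi.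
Proof.
by rewrite ub_unit chi_unitL chi_unitR -opapply_comp optens_comp opcomp1l opcomp1r.
Qed.

Lemma gramL_psi i j :
  opapply (optens (opcomp (opadj (Et i)) (Et j)) (@idop R HRc)) psi =
  fun t => (i == j)%:R * psi t.
Proof.
rewrite -[@idop R HRc]opcomp1l -optens_comp opapply_comp.
by rewrite /psi -chi_unitL unitL_apply eqxx scale1v -chi_unitL_adj unitL_apply opapply_scalev.
Qed.

Lemma gramR_psi r s :
  opapply (optens (@idop R HLc) (opcomp (opadj (Ft r)) (Ft s))) psi =
  fun t => (r == s)%:R * psi t.
Proof.
rewrite -[@idop R HLc]opcomp1l -optens_comp opapply_comp.
by rewrite /psi -chi_unitR unitR_apply eqxx scale1v -chi_unitR_adj unitR_apply opapply_scalev.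
Qed.

Definition psiL : op R HLc HRc := fun l r => psi (l, r).
Definition psiR : op R HRc HLc := fun r l => psi (l, r).

Lemma gramL_oprange i j x : oprange psiL x ->
  opapply (opcomp (opadj (Et i)) (Et j)) x = fun l => (i == j)%:R * x l.
Proof.
move=> [y ->]; rewrite -opapply_comp -opapply_scale; congr opapply.
apply: functional_extensionality => l; apply: functional_extensionality => r.
by have := congr1 (fun f => f (l, r)) (gramL_psi i j); rewrite optens_idr_apply.
Qed.

Lemma gramR_oprange r s y : oprange psiR y ->
  opapply (opcomp (opadj (Ft r)) (Ft s)) y = fun t => (r == s)%:R * y t.
Proof.
move=> [x ->]; rewrite -opapply_comp -opapply_scale; congr opapply.
apply: functional_extensionality => t; apply: functional_extensionality => l.
by have := congr1 (fun f => f (l, t)) (gramR_psi r s); rewrite optens_idl_apply.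
Qed.

Section Schmidt.
Variables (p q : nat) (m : 'I_p -> vec R HLc) (nn : 'I_q -> vec R HRc).
Hypotheses (om : orthonormal_family m) (sm : spans (oprange psiL) m).
Hypotheses (on : orthonormal_family nn) (sn : spans (oprange psiR) nn).

Definition schmidt_basis (st : ('I_p * 'I_q)%type) := vtens (m st.1) (nn st.2).
Definition phi (st : ('I_p * 'I_q)%type) := dot (schmidt_basis st) psi.

Lemma psi_expand : psi = lincomb phi schmidt_basis.
Proof.
apply: functional_extensionality => -[l r].
have colL : oprange psiL (fun l => psi (l, r)) by exists (std r); rewrite opapply_std.
have := congr1 (fun f => f l) (proj2 sm _ colL) => /= ->.
rewrite /lincomb sum_pair /=; apply: eq_bigr => s _.
pose g := fun r => dot (m s) (fun l => psi (l, r)).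
have rowR : oprange psiR g.
  exists (fun l => Num.conj (m s l)); apply: functional_extensionality => r'.
  by rewrite /g /dot /opapply; apply: eq_bigr => l' _; rewrite mulrC.
have := congr1 (fun f => f r) (proj2 sn _ rowR); rewrite /= -/(g r) => ->.
rewrite mulr_suml; apply: eq_bigr => t _.
rewrite /schmidt_basis /vtens /= [m s l * _]mulrC mulrA; congr (_ * _ * _).
rewrite /phi /dot /g sum_pair /= exchange_big /=; apply: eq_bigr => r' _.
rewrite mulr_sumr; apply: eq_bigr => l' _.
by rewrite rmorphM /= mulrA [Num.conj (m s l') * _]mulrC.
Qed.

Definition UL : op R HLc ({x : unit & factorL n x} * 'I_p)%type :=
  fun l xs => opapply (Et (untagL xs.1)) (m xs.2) l.
Definition UR : op R HRc ('I_q * {x : unit & factorR k x})%type :=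
  fun r ty => opapply (Ft (untagR ty.2)) (nn ty.1) r.

Lemma UL_isometry : is_isometry UL.
Proof.
apply: functional_extensionality => -[[[] i] s]; apply: functional_extensionality => -[[[] j] s'].
rewrite /opcomp /opadj /UL /idop.
rewrite -[(_, s) == _]/((tagL i, s) == (tagL j, s')) xpair_eqE eq_tagL /=.
transitivity (dot (opapply (Et i) (m s)) (opapply (Et j) (m s'))); first by [].
rewrite dot_adj -opapply_comp gramL_oprange; last by case: sm.
by rewrite dot_scaler om -natrM mulnb.
Qed.

Lemma UR_isometry : is_isometry UR.
Proof.
apply: functional_extensionality => -[t [[] r]]; apply: functional_extensionality => -[t' [[] r']].
rewrite /opcomp /opadj /UR /idop.
rewrite -[(t, _) == _]/((t, tagR r) == (t', tagR r')) xpair_eqE eq_tagR /=.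
transitivity (dot (opapply (Ft r) (nn t)) (opapply (Ft r') (nn t'))); first by [].
rewrite dot_adj -opapply_comp gramR_oprange; last by case: sn.
by rewrite dot_scaler on -natrM mulnb andbC.
Qed.

Lemma phi_unit : is_isometry chi -> unit_vector phi.
Proof.
move=> chiI; rewrite /unit_vector -/(dot phi phi) -(dot_coords _ psi_expand).
by rewrite /psi isometry_dot // /ub ubasis_orthonormal // eqxx.
Qed.

Lemma iota_phi_apply (HL HR : finType) (z : vec R (HL * HR)%type) a s t b :
  opapply (iota_phi (HL := HL) (HR := HR) phi) z ((a, s), (t, b)) = phi (s, t) * z (a, b).
Proof.
rewrite /opapply /iota_phi sum_pair /= (bigD1 a) //= [X in _ + X]big1 ?addr0; last first.
  by move=> a' na; apply: big1 => b' _; rewrite eq_sym (negPf na) !mul0r.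
rewrite (bigD1 b) //= [X in _ + X]big1 ?addr0; last first.
  by move=> b' nb; rewrite eq_sym (negPf nb) mulr0 mul0r.
by rewrite !eqxx mul1r mulr1.
Qed.

(* Expand [x] in the basis [ub i r], push [chi] through with [chi_ub], and expand [psi]. *)
Lemma chi_factorization x :
  opapply chi x = opapply (optens UL UR)
                            (opapply (iota_phi phi) (opapply zeta x)).
Proof.
apply: functional_extensionality => -[l r].
rewrite {1}(ubasis_expand Uu x) opapply_lincomb /lincomb sum_factor_space.
set W := opapply (iota_phi phi) _.
rewrite [in RHS]/opapply sum_pair sum_pair sum_tagL.
apply: eq_bigr => i _.
under eq_bigr => r' _ do
  rewrite -/(ub i r') chi_ub {1}psi_expand opapply_lincomb /lincomb sum_pair mulr_sumr.
rewrite exchange_big; apply: eq_bigr => s _.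
rewrite sum_pair.
under eq_bigr => r' _ do rewrite mulr_sumr.
rewrite exchange_big; apply: eq_bigr => t _.
rewrite sum_tagR; apply: eq_bigr => r' _.
rewrite /W iota_phi_apply zeta_apply optens_vtens /vtens /optens /UL /UR /=.
ring.
Qed.

End Schmidt.
End BalancedSplitting.

Definition splitting_decomposition (R : realType) (H HLc HRc : finType)
    (chi : op R (HLc * HRc)%type H) : Prop :=
  exists (I : finType) (TL TR : I -> finType)
         (zeta : op R ({i : I & TL i} * {i : I & TR i})%type H),
    canonical_splitting (stlocL chi) zeta /\
    exists (HML HMR : finType) (phi : vec R (HML * HMR)%type)
           (UL : op R HLc ({i : I & TL i} * HML)%type)
           (UR : op R HRc (HMR * {i : I & TR i})%type),
      unit_vector phi /\ is_isometry UL /\ is_isometry UR /\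
      forall x : vec R H,
        opapply chi x = opapply (optens UL UR) (opapply (iota_phi phi) (opapply zeta x)).

Lemma factor_indices_inhabited (R : realType) (H : finType) n k
    (U : op R (factor_space n k) H) :
  H -> Defs.is_unitary U -> inhabited ('I_n * 'I_k).
Proof.
move=> h0 [UU _]; case: (pickP (fun _ : factor_space n k => true)) => [p0 _|D0].
  exact: inhabits (unemb p0).
have := congr1 (fun M => M h0 h0) UU; rewrite /opcomp /idop eqxx big_pred0 //.
by move/eqP; rewrite eq_sym oner_eq0.
Qed.

Lemma splitting_decomposition_nonempty (R : realType) (H HLc HRc : finType)
    (chi : op R (HLc * HRc)%type H) :
  H -> is_isometry chi -> balanced chi -> is_factor (stlocL chi) ->
  splitting_decomposition chi.
Proof.
move=> h0 chiI chiB [[Aadj Abic] Acent].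
have [n [k [U Urep]]] := factor_rep_unitary Aadj Abic Acent h0.
have [[i0 r0]] := factor_indices_inhabited h0 (proj1 Urep).
have /fin_all_exists [Et hE] i : stlocL chi (unitL U i i0) by exact: unitL_in_alg.
have /fin_all_exists [Ft hF] r : stlocR chi (unitR U r r0) by exact/chiB/unitR_commutant.
have [p [m [om sm]]] := subspace_onb (subspace_oprange (psiL chi U i0 r0)).
have [q [nn [on sn]]] := subspace_onb (subspace_oprange (psiR chi U i0 r0)).
exists unit, (factorL n), (factorR k), (zeta U).
split; first by exists U.
exists ('I_p : finType), ('I_q : finType), (phi chi U i0 r0 m nn), (UL Et m), (UR Ft nn).
split; first exact (phi_unit Urep sm sn chiI).
split; first exact (UL_isometry Urep hE om sm).
split; first exact (UR_isometry Urep hF on sn).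
exact (chi_factorization Urep hE hF sm sn).
Qed.

(* On the zero space every operator vanishes; only [phi] needs a nonzero space. *)
Lemma splitting_decomposition_empty (R : realType) (H HLc HRc : finType)
    (chi : op R (HLc * HRc)%type H) :
  (H -> False) -> is_factor (stlocL chi) -> splitting_decomposition chi.
Proof.
move=> nH [[_ Abic] _].
pose T0 := fun _ : unit => ('I_0 : finType).
have nD : dsum T0 T0 -> False by case=> [[] [[i hi] _]].
have nL : {i : unit & T0 i} -> False by case=> [[] [i hi]].
pose U : op R (dsum T0 T0) H := fun _ _ => 0.
have opD (M N : op R (dsum T0 T0) (dsum T0 T0)) : M = N.
  by apply: functional_extensionality => p; case: (nD p).
exists unit, T0, T0, (opcomp (dsum_incl R (TL := T0) (TR := T0)) U).
split.
  exists U; split=> //; split.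
    split; last exact: opD.
    by apply: functional_extensionality => h; case: (nH h).
  move=> M; split=> _; first by exists (fun _ _ => 0); apply: opD.
  by exists (@idop R H); split; [exact: alg_id Abic | apply: opD].
exists 'I_1, 'I_1, (fun _ => 1), (fun _ _ => 0), (fun _ _ => 0).
split; first by rewrite /unit_vector sum_pair !big_ord1 /= conjC1 mulr1.
split; first by apply: functional_extensionality => -[a s]; case: (nL a).
split; first by apply: functional_extensionality => -[s a]; case: (nL a).
move=> x; apply: functional_extensionality => lr.
rewrite {1}/opapply big1; last by move=> h; case: (nH h).
by rewrite /opapply big1 // => P _; rewrite /optens !mul0r.
Qed.

Theorem mainTheorem14 (R : realType) (H HLc HRc : finType)
  (chi : op R (HLc * HRc)%type H) :
  is_isometry chi -> balanced chi -> is_factor (stlocL chi) ->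
  exists (I : finType) (TL TR : I -> finType)
         (zeta : op R ({i : I & TL i} * {i : I & TR i})%type H),
    canonical_splitting (stlocL chi) zeta /\
    exists (HML HMR : finType) (phi : vec R (HML * HMR)%type)
           (UL : op R HLc ({i : I & TL i} * HML)%type)
           (UR : op R HRc (HMR * {i : I & TR i})%type),
      unit_vector phi /\ is_isometry UL /\ is_isometry UR /\
      forall x : vec R H,
        opapply chi x = opapply (optens UL UR) (opapply (iota_phi phi) (opapply zeta x)).
Proof.
move=> chiI chiB chiF.
case: (pickP (fun _ : H => true)) => [h0 _ | H0].
  exact: splitting_decomposition_nonempty h0 chiI chiB chiF.
by apply: splitting_decomposition_empty chiF => h; have := H0 h.
Qed.
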